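(* Let $n\ge1$, $q\in\{2,3,\ldots\}$, $\alpha>0$, $N>n$, and for $s\ge0$ let $\mu_q(s)$ be the unique positive solution of $N\mu^q-ns\mu^{q-1}-q\alpha^q=0$. Let $b=\mu_q(0)=\alpha(q/N)^{1/q}$ and $a=n/N=\lim_{s\to\infty}\mu_q(s)/s$. Then for every $s>0$, $$\mu_q(s)<b+as.$$ In particular, if an inverse Wishart MAP has eigenvalue map $s\mapsto \frac{ns+\alpha'}{n+m'+p+1}$ with the same floor $\alpha'/(n+m'+p+1)=b$ and the same shrinkage $n/(n+m'+p+1)=a$, then each nonzero-eigenvalue-direction eigenvalue of the power inverse Wishart MAP is strictly smaller than the corresponding eigenvalue of this inverse Wishart MAP.
   Context: For $\Psi=\alpha I$ the power inverse Wishart MAP covariance estimator (prior parameters $(\alpha I,m,q)$, $N=n+p+qm+1$) has the same eigenvectors as the sample covariance $S$, and an eigenvalue $s$ of $S$ is mapped to $\mu_q(s)$; the inverse Wishart MAP (prior parameters $(\alpha' I,m')$) is $\frac{1}{n+m'+p+1}(nS+\alpha' I)$. The floor of such an eigenvalue map is its value at $s=0$ and the shrinkage is its limit of (value)/$s$ as $s\to\infty$. *)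

From Stdlib Require Import Reals.
Open Scope R_scope.

Definition is_mu_q (n q : nat) (alpha N s mu : R) : Prop :=
  0 < mu /\ N * mu ^ q - INR n * s * mu ^ (q - 1) - INR q * alpha ^ q = 0.

Definition floor_b (q : nat) (alpha N : R) : R :=
  alpha * Rpower (INR q / N) (1 / INR q).
Definition shrink_a (n : nat) (N : R) : R := INR n / N.

Definition iw_map (n p : nat) (m' alpha' s : R) : R :=
  (INR n * s + alpha') / (INR n + m' + INR p + 1).

(* Write t = n s and k = q - 1 >= 1.  The eigenvalue mu = mu_q(s) solves
   mu^k (N mu - t) = q alpha^q, and the floor b is characterized by
   N b^(k+1) = q alpha^q (floor_b_pow).  The line value c = b + t/N satisfies
   N c - t = N b, so if mu >= c > b then
       mu^k (N mu - t) >= c^k (N c - t) = c^k N b > b^k N b = q alpha^q,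
   which is impossible; hence mu < c (root_below_line). *)

From Stdlib Require Import Reals Lra Lia.
Open Scope R_scope.

Lemma pow_lt_pow_base (x y : R) (k : nat) :
  0 < x -> x < y -> x ^ S k < y ^ S k.
Proof.
  intros Hx Hxy; induction k as [|k IH]; simpl in *.
  - lra.
  - assert (0 < x * x ^ k) by (apply Rmult_lt_0_compat; [lra | apply pow_lt; lra]).
    nra.
Qed.

Lemma floor_b_pos (q : nat) (alpha N : R) :
  0 < alpha -> 0 < floor_b q alpha N.
Proof.
  intros Ha; unfold floor_b, Rpower.
  apply Rmult_lt_0_compat; [exact Ha | apply exp_pos].
Qed.

Lemma floor_b_pow (q : nat) (alpha N : R) :
  (1 <= q)%nat -> 0 < N -> N * floor_b q alpha N ^ q = INR q * alpha ^ q.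
Proof.
  intros Hq HN.
  assert (Hq0 : 0 < INR q) by (apply lt_0_INR; lia).
  assert (Hr : 0 < INR q / N) by (apply Rdiv_lt_0_compat; lra).
  assert (Hroot : Rpower (INR q / N) (1 / INR q) ^ q = INR q / N).
  { rewrite <- Rpower_pow by (unfold Rpower; apply exp_pos).
    rewrite Rpower_mult.
    replace (1 / INR q * INR q) with 1 by (field; lra).
    apply Rpower_1; exact Hr. }
  unfold floor_b; rewrite Rpow_mult_distr, Hroot.
  field; lra.
Qed.

Lemma root_below_line (k : nat) (N b t mu : R) :
  (1 <= k)%nat -> 0 < N -> 0 < b -> 0 < t -> 0 < mu ->
  N * mu ^ S k - t * mu ^ k = N * b ^ S k ->
  mu < b + t / N.
Proof.
  intros Hk HN Hb Ht Hmu Heq.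
  set (c := b + t / N).
  assert (Hbc : b < c) by (unfold c; assert (0 < t / N) by (apply Rdiv_lt_0_compat; lra); lra).
  assert (Hshift : N * c - t = N * b) by (unfold c; field; lra).
  destruct (Rlt_or_le mu c) as [Hlt | Hge]; [exact Hlt | exfalso].
  destruct k as [|j]; [lia |].
  assert (Hpow_le : c ^ S j <= mu ^ S j) by (apply pow_incr; lra).
  assert (Hpow_lt : b ^ S j < c ^ S j) by (apply pow_lt_pow_base; lra).
  assert (Hbj : 0 < b ^ S j) by (apply pow_lt; lra).
  (* mu^(j+1) (N mu - t) >= c^(j+1) (N c - t) = c^(j+1) N b > b^(j+1) N b *)
  assert (Hfactor : N * mu ^ S (S j) - t * mu ^ S j = mu ^ S j * (N * mu - t))
    by (simpl; ring).
  assert (Hlower : c ^ S j * (N * b) <= mu ^ S j * (N * mu - t)).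
  { apply Rmult_le_compat; [lra | nra | exact Hpow_le | nra]. }
  assert (Hstrict : b ^ S j * (N * b) < c ^ S j * (N * b)).
  { apply Rmult_lt_compat_r; [nra | exact Hpow_lt]. }
  replace (N * b ^ S (S j)) with (b ^ S j * (N * b)) in Heq by (simpl; ring).
  lra.
Qed.

Lemma mu_q_below_line (n q : nat) (alpha N s mu : R) :
  (1 <= n)%nat -> (2 <= q)%nat -> 0 < alpha -> INR n < N -> 0 < s ->
  is_mu_q n q alpha N s mu ->
  mu < floor_b q alpha N + shrink_a n N * s.
Proof.
  intros Hn Hq Ha HN Hs [Hmu Heq].
  assert (Hn0 : 0 < INR n) by (apply lt_0_INR; lia).
  assert (HN0 : 0 < N) by lra.
  replace (shrink_a n N * s) with (INR n * s / N) by (unfold shrink_a; field; lra).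
  destruct q as [|k]; [lia |].
  apply (root_below_line k N (floor_b (S k) alpha N) (INR n * s) mu);
    [lia | lra | apply floor_b_pos; lra | nra | exact Hmu |].
  rewrite floor_b_pow by (lia || lra).
  replace (S k - 1)%nat with k in Heq by lia.
  lra.
Qed.

Lemma iw_map_affine (n p : nat) (m' alpha' s : R) :
  INR n + m' + INR p + 1 <> 0 ->
  iw_map n p m' alpha' s
  = alpha' / (INR n + m' + INR p + 1) + INR n / (INR n + m' + INR p + 1) * s.
Proof. intros HD; unfold iw_map; field; exact HD. Qed.

Theorem mainTheorem8 (n q : nat) (alpha N : R) :
  (1 <= n)%nat -> (2 <= q)%nat -> 0 < alpha -> INR n < N ->
  (forall s mu, 0 < s -> is_mu_q n q alpha N s mu ->
     mu < floor_b q alpha N + shrink_a n N * s) /\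
  (forall (p : nat) (m' alpha' : R),
     alpha' / (INR n + m' + INR p + 1) = floor_b q alpha N ->
     INR n / (INR n + m' + INR p + 1) = shrink_a n N ->
     forall s mu, 0 < s -> is_mu_q n q alpha N s mu ->
       mu < iw_map n p m' alpha' s).
Proof.
  intros Hn Hq Ha HN; split.
  - intros s mu Hs Hmu; exact (mu_q_below_line n q alpha N s mu Hn Hq Ha HN Hs Hmu).
  - intros p m' alpha' Hfloor Hshrink s mu Hs Hmu.
    (* The shrinkage n/N is positive, so the denominator D cannot vanish. *)
    assert (HD : INR n + m' + INR p + 1 <> 0).
    { assert (Hn0 : 0 < INR n) by (apply lt_0_INR; lia).
      assert (Ha_pos : 0 < shrink_a n N) by (apply Rdiv_lt_0_compat; lra).
      intros HD0; rewrite HD0, Rdiv_0_r in Hshrink; lra. }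
    rewrite iw_map_affine, Hfloor, Hshrink by exact HD.
    exact (mu_q_below_line n q alpha N s mu Hn Hq Ha HN Hs Hmu).
Qed.
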